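(* Let $\Omega\subset\mathbb{C}^n$ be a bounded domain, and let $\Psi,\Psi'$ be elementary local indicators on $\mathbb{D}^n$ such that $\Psi\le\Psi'+C$ for some constant $C$, and $\tau':=\tau_{\Psi'}>0$. Let $A\subset\mathbb{D}$, $a\in\Omega$ and $\varphi\in Hol(\mathbb{D},\Omega)$ satisfy $\sum_{\alpha\in A}m_{\varphi,a,\Psi'}(\alpha)\le\tau'$. Then $\sum_{\alpha\in A}m_{\varphi,a,\Psi}(\alpha)\le\tau:=\tau_\Psi$.
   Context: $\mathbb{D}$ is the unit disk; $z\cdot\bar w=\sum_jz_j\bar w_j$. An elementary local indicator is $\Psi(z)=\max_{1\le j\le n}m_j\log|z\cdot\bar v_j|$ on $\mathbb{D}^n$, with $\{v_j\}$ a basis of $\mathbb{C}^n$ and $m_j\in\mathbb{R}_+$; its Monge–Ampère mass at $0$ is $\tau_\Psi=m_1\cdots m_n$. Multiplicity: if $\varphi(\alpha)=a$, $m_{\varphi,a,\Psi}(\alpha)=\min\big(\tau_\Psi,\liminf_{\zeta\to0}\Psi(\varphi(\alpha+\zeta)-a)/\log|\zeta|\big)$; otherwise $m_{\varphi,a,\Psi}(\alpha)=0$. *)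

From mathcomp Require Import ssreflect ssrbool eqtype ssrnat seq fintype.
From Stdlib Require Import Reals List ClassicalEpsilon.
From Coquelicot Require Import Coquelicot.
Open Scope R_scope.

Definition cvec (n : nat) := 'I_n -> C.

Definition ord_list (n : nat) : list 'I_n := enum 'I_n.

Definition Csum (n : nat) (f : 'I_n -> C) : C :=
  fold_right Cplus (RtoC 0) (List.map f (ord_list n)).

Definition cdot (n : nat) (z w : cvec n) : C :=
  Csum n (fun j => Cmult (z j) (Cconj (w j))).

Definition Rbar_log (x : R) : Rbar :=
  if Req_EM_T x 0 then m_infty else Finite (ln x).

Definition Rbar_max2 (x y : Rbar) : Rbar :=
  if Rbar_le_dec x y then y else x.

Definition Rbar_min2 (x y : Rbar) : Rbar :=
  if Rbar_le_dec x y then x else y.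

Definition is_basis (n : nat) (v : 'I_n -> cvec n) : Prop :=
  forall c : 'I_n -> C,
    (forall k : 'I_n, Csum n (fun j => Cmult (c j) (v j k)) = RtoC 0) ->
    forall j, c j = RtoC 0.

Definition elem_indicator (n : nat) (v : 'I_n -> cvec n) (m : 'I_n -> R) : Prop :=
  is_basis n v /\ forall j, 0 < m j.

Definition Psi (n : nat) (v : 'I_n -> cvec n) (m : 'I_n -> R) (z : cvec n) : Rbar :=
  fold_right Rbar_max2 m_infty
    (List.map (fun j => Rbar_mult (Finite (m j)) (Rbar_log (Cmod (cdot n z (v j)))))
       (ord_list n)).

Definition tau (n : nat) (m : 'I_n -> R) : R :=
  fold_right Rmult 1 (List.map m (ord_list n)).

Definition in_polydisk (n : nat) (z : cvec n) : Prop := forall k, Cmod (z k) < 1.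

Definition liminf0 (g : C -> Rbar) : Rbar :=
  Rbar_lub (fun y => exists r, 0 < r /\
    y = Rbar_glb (fun w => exists zeta, 0 < Cmod zeta < r /\ w = g zeta)).

Definition vsub (n : nat) (z w : cvec n) : cvec n := fun k => Cminus (z k) (w k).

Definition multiplicity (n : nat) (phi : C -> cvec n) (a : cvec n)
    (v : 'I_n -> cvec n) (m : 'I_n -> R) (alpha : C) : Rbar :=
  if excluded_middle_informative (phi alpha = a) then
    Rbar_min2 (Finite (tau n m))
      (liminf0 (fun zeta =>
         Rbar_div (Psi n v m (vsub n (phi (Cplus alpha zeta)) a))
                  (Finite (ln (Cmod zeta)))))
  else Finite 0.

Definition Rbar_sum_over (A : C -> Prop) (f : C -> Rbar) : Rbar :=
  Rbar_lub (fun s => exists l : list C, NoDup l /\ (forall x, In x l -> A x) /\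
    s = fold_right Rbar_plus (Finite 0) (List.map f l)).

Definition cn_open (n : nat) (U : cvec n -> Prop) : Prop :=
  forall z, U z -> exists r, 0 < r /\
    forall w, (forall k, Cmod (Cminus (w k) (z k)) < r) -> U w.

Definition cn_bounded (n : nat) (U : cvec n -> Prop) : Prop :=
  exists M, forall z, U z -> forall k, Cmod (z k) <= M.

Definition cn_connected (n : nat) (U : cvec n -> Prop) : Prop :=
  forall V W : cvec n -> Prop, cn_open n V -> cn_open n W ->
    (forall z, U z -> V z \/ W z) ->
    (exists z, U z /\ V z) -> (exists z, U z /\ W z) ->
    exists z, U z /\ V z /\ W z.

Definition bounded_domain (n : nat) (U : cvec n -> Prop) : Prop :=
  (exists z, U z) /\ cn_open n U /\ cn_connected n U /\ cn_bounded n U.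

Definition Hol_disk (n : nat) (Omega : cvec n -> Prop) (phi : C -> cvec n) : Prop :=
  (forall z, Cmod z < 1 -> Omega (phi z)) /\
  (forall k z, Cmod z < 1 ->
     @ex_derive C_AbsRing C_NormedModule (fun w => phi w k) z).

(* Put w_k = z.conj(v_k) and w'_j = z.conj(v'_j), so that Psi is
   max_k m_k log|w_k|, Psi' is max_j m'_j log|w'_j|, and w' = A w for an
   invertible matrix A with inverse B.  Testing Psi <= Psi' + C along the
   vectors z with w' = t e_j, t -> 0, shows that B_kj <> 0 forces
   m'_j <= m_k.  Since A_jk is the cofactor (k, j) of B divided by det B,
   A_jk <> 0 yields a bijection between the indices other than k and those
   other than j along nonzero entries of B; multiplying the corresponding
   inequalities gives tau' m_k <= tau m'_j.  Hence Psi(z) <= y <= 0 implies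
   Psi'(z) <= (tau'/tau) y + K, so that (tau'/tau) m_{phi,a,Psi} <=
   m_{phi,a,Psi'} at every point, and summing over A gives the claim. *)

From HB Require Import structures.
From mathcomp Require Import all_boot all_algebra fingroup perm.
From mathcomp Require Import boolp.
From Stdlib Require Import Reals Lra List ClassicalEpsilon Classical.
From Coquelicot Require Import Coquelicot.

Delimit Scope ring_scope with ring.
Open Scope R_scope.

Lemma exp_le_exp x y : exp x <= exp y <-> x <= y.
Proof.
split=> [Hxy | [Hxy | ->]].
- by apply: Rnot_lt_le => /exp_increasing; lra.
- by left; apply: exp_increasing.
- exact: Rle_refl.
Qed.

Lemma ln_ge0 x : 1 <= x -> 0 <= ln x.
Proof. by move=> Hx; rewrite -ln_1; apply: ln_le; lra. Qed.

Lemma ln_lt0 x : 0 < x < 1 -> ln x < 0.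
Proof. by move=> Hx; rewrite -ln_1; apply: ln_increasing; lra. Qed.

Lemma nonpos_div_le_scaled y t t' a b : y <= 0 -> 0 < t -> 0 < a -> 0 < b ->
  t' * a <= t * b -> y / a <= t' / t * y / b.
Proof.
move=> Hy Ht Ha Hb Hab.
have Hinv : 0 < / (t * a * b).
  by apply: Rinv_0_lt_compat; apply: Rmult_lt_0_compat => //; apply: Rmult_lt_0_compat.
have E : y / a - t' / t * y / b = y * (t * b - t' * a) * / (t * a * b) by field; lra.
have : y * (t * b - t' * a) <= 0 by nra.
nra.
Qed.

Lemma Rbar_lub_ub (E : Rbar -> Prop) x : E x -> Rbar_le x (Rbar_lub E).
Proof. by rewrite /Rbar_lub; case: Rbar_ex_lub => l [Hub _] /=; apply: Hub. Qed.

Lemma Rbar_lub_least (E : Rbar -> Prop) b :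
  (forall x, E x -> Rbar_le x b) -> Rbar_le (Rbar_lub E) b.
Proof. by rewrite /Rbar_lub; case: Rbar_ex_lub => l [_ Hl] /=; apply: Hl. Qed.

Lemma Rbar_glb_lb (E : Rbar -> Prop) x : E x -> Rbar_le (Rbar_glb E) x.
Proof. by rewrite /Rbar_glb; case: Rbar_ex_glb => l [Hlb _] /=; apply: Hlb. Qed.

Lemma Rbar_glb_greatest (E : Rbar -> Prop) b :
  (forall x, E x -> Rbar_le b x) -> Rbar_le b (Rbar_glb E).
Proof. by rewrite /Rbar_glb; case: Rbar_ex_glb => l [_ Hl] /=; apply: Hl. Qed.

Lemma Rbar_le_of_le_minus_eps (L : Rbar) x :
  (forall eps, 0 < eps -> Rbar_le (Finite (x - eps)) L) -> Rbar_le (Finite x) L.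
Proof.
case: L => [l| |] /= H //; last by have := H 1; lra.
by apply: Rnot_lt_le => Hlt; have := H ((x - l) / 2); lra.
Qed.

Lemma Rbar_mult_pos_m_infty r : 0 < r -> Rbar_mult (Finite r) m_infty = m_infty.
Proof.
move=> Hr; rewrite /Rbar_mult /=; case: Rle_dec => H; last lra.
by case: Rle_lt_or_eq_dec => // H'; lra.
Qed.

Lemma Rbar_le_div_neg (u : Rbar) y l : l < 0 ->
  Rbar_le (Finite y) (Rbar_div u (Finite l)) <-> Rbar_le u (Finite (y * l)).
Proof.
move=> Hl; have Hil : / l < 0 by apply: Rinv_lt_0_compat.
case: u => [r| |] /=.
- have Er : r * / l * l = r by field; lra.
  have Ey : y * l * / l = y by field; lra.
  split=> H.
  + have : (r * / l - y) * l <= 0 by nra.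
    nra.
  + have : (y * l - r) * / l <= 0 by nra.
    nra.
- by case: Rle_dec => // H; exfalso; lra.
- by case: Rle_dec => // H; exfalso; lra.
Qed.

Lemma Rbar_min2_ge {t x} {L : Rbar} : x <= t -> Rbar_le (Finite x) L ->
  exists M, Rbar_min2 (Finite t) L = Finite M /\ x <= M <= t /\ Rbar_le (Finite M) L.
Proof.
rewrite /Rbar_min2; case: Rbar_le_dec => HtL Hxt HxL.
- by exists t; split; [|split; [lra|]].
- case: L HtL HxL => [l| |] /= HtL HxL //.
  exists l; split; [by []|split; [split|]]; [by [] | |exact: Rle_refl].
  by apply: Rlt_le; apply: Rnot_le_lt.
Qed.

Lemma In_ord_list n (k : 'I_n) : In k (ord_list n).
Proof.
have : k \in ord_list n by rewrite /ord_list mem_enum.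
elim: (ord_list n) => [|j s IH] //=; rewrite seq.in_cons => /orP [/eqP ->|/IH]; by auto.
Qed.

Lemma fold_Rbar_max2_le (l : list Rbar) y :
  Rbar_le (fold_right Rbar_max2 m_infty l) y <-> (forall x, In x l -> Rbar_le x y).
Proof.
elim: l => [|x l IH] /=; first by split=> // _; case: y.
rewrite /Rbar_max2; case: Rbar_le_dec => Hx; split.
- by move=> H z [<-|Hz]; [apply: Rbar_le_trans Hx H | apply: (proj1 IH H)].
- by move=> H; apply: (proj2 IH) => z Hz; apply: H; right.
- move=> H z [<-|Hz] //; apply: (proj1 IH _ z Hz).
  by apply: Rbar_le_trans H; apply: Rbar_lt_le; apply: Rbar_not_le_lt.
- by move=> H; apply: H; left.
Qed.

Lemma Rbar_mult_log_le r x y : 0 < r -> 0 <= x ->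
  Rbar_le (Rbar_mult (Finite r) (Rbar_log x)) (Finite y) <-> x <= exp (y / r).
Proof.
move=> Hr Hx; rewrite /Rbar_log; case: Req_EM_T => Hx0.
  by rewrite Rbar_mult_pos_m_infty // Hx0; split=> // _; left; apply: exp_pos.
have Hxp : 0 < x by lra.
rewrite /= Rmult_comm Rle_div_r // -exp_le_exp exp_ln //.
Qed.

Lemma Psi_le {n v m z y} : (forall k, 0 < m k) ->
  Rbar_le (Psi n v m z) (Finite y) <->
  forall k, Cmod (cdot n z (v k)) <= exp (y / m k).
Proof.
move=> Hm; rewrite /Psi fold_Rbar_max2_le; split=> H.
- move=> k; rewrite -Rbar_mult_log_le //; last exact: Cmod_ge_0.
  by apply: H; apply/in_map_iff; exists k; split; last exact: In_ord_list.
- by move=> x /in_map_iff [k [<- _]]; rewrite Rbar_mult_log_le //; apply: Cmod_ge_0.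
Qed.

Lemma liminf0_ge {g : C -> Rbar} {x} r : 0 < r ->
  (forall zeta, 0 < Cmod zeta < r -> Rbar_le (Finite x) (g zeta)) ->
  Rbar_le (Finite x) (liminf0 g).
Proof.
move=> Hr H; apply: Rbar_le_trans (Rbar_lub_ub _ _ (ex_intro _ r (conj Hr erefl))).
by apply: Rbar_glb_greatest => w [zeta [Hzeta ->]]; apply: H.
Qed.

Lemma liminf0_ge_near {g : C -> Rbar} {x eps} :
  Rbar_le (Finite x) (liminf0 g) -> 0 < eps ->
  exists r, 0 < r /\ forall zeta, 0 < Cmod zeta < r -> Rbar_le (Finite (x - eps)) (g zeta).
Proof.
move=> Hx Heps; apply: NNPP => Hnot.
suff : Rbar_le (liminf0 g) (Finite (x - eps)).
  by move=> /(Rbar_le_trans _ _ _ Hx) /=; lra.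
apply: Rbar_lub_least => _ [r [Hr ->]].
have [zeta [Hzeta Hlt]] : exists zeta, 0 < Cmod zeta < r /\ Rbar_lt (g zeta) (Finite (x - eps)).
  apply: NNPP => Hno; apply: Hnot; exists r; split=> // zeta Hzeta.
  by apply: Rbar_not_lt_le => Hlt; apply: Hno; exists zeta.
by apply: Rbar_le_trans (Rbar_glb_lb _ _ (ex_intro _ zeta (conj Hzeta erefl))) _; apply: Rbar_lt_le.
Qed.

Lemma ex_uniform_radius n (P : 'I_n -> R -> Prop) :
  (forall k d d', P k d -> 0 < d' <= d -> P k d') ->
  (forall k, exists d, 0 < d /\ P k d) -> exists d, 0 < d /\ forall k, P k d.
Proof.
move=> Hmono Hex.
suff [d [Hd H]] : exists d, 0 < d /\ forall k, In k (ord_list n) -> P k d.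
  by exists d; split=> // k; apply: H; apply: In_ord_list.
elim: (ord_list n) => [|k l [d [Hd IH]]]; first by exists 1; split=> //; lra.
have [d1 [Hd1 H1]] := Hex k.
have Hmin : 0 < Rmin d1 d by apply: Rmin_pos.
exists (Rmin d1 d); split=> // j [<-|Hj].
- by apply: Hmono H1 _; split=> //; apply: Rmin_l.
- by apply: Hmono (IH j Hj) _; split=> //; apply: Rmin_r.
Qed.

Lemma ex_derive_C_near (f : C -> C) z0 eps :
  @ex_derive C_AbsRing C_NormedModule f z0 -> 0 < eps ->
  exists d, 0 < d /\
    forall zeta, Cmod zeta < d -> Cmod (Cminus (f (Cplus z0 zeta)) (f z0)) < eps.
Proof.
move=> Hf Heps; have Heps2 : 0 < eps / 2 by lra.
have [d Hd] := proj1 (filterlim_locally _ _) (ex_derive_continuous f z0 Hf) (mkposreal _ Heps2).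
exists d; split=> [|zeta Hzeta]; first exact: cond_pos.
have Hball : @ball (AbsRing_UniformSpace C_AbsRing) z0 d (Cplus z0 zeta).
  rewrite /ball /= /AbsRing_ball /abs /= /minus /plus /opp /=.
  by have -> : (z0 + zeta + - z0)%C = zeta by ring.
(* The norm of C_NormedModule is only equivalent to Cmod, up to sqrt 2. *)
have Hnorm : Cmod (Cminus (f (Cplus z0 zeta)) (f z0)) < sqrt 2 * (eps / 2).
  exact: norm_compat2 _ _ _ (Hd _ Hball).
have Hs : sqrt 2 * sqrt 2 = 2 by apply: sqrt_sqrt; lra.
have := sqrt_pos 2; nra.
Qed.

(* Coquelicot's C, equipped with mathcomp's field structure so that matrices
   over C can be used. *)
Definition Cfield : Type := C.
HB.instance Definition _ := gen_eqMixin Cfield.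
HB.instance Definition _ := gen_choiceMixin Cfield.

Lemma Cfield_addA : associative (Cplus : Cfield -> Cfield -> Cfield).
Proof. by move=> x y z; rewrite Cplus_assoc. Qed.
Lemma Cfield_addC : commutative (Cplus : Cfield -> Cfield -> Cfield).
Proof. exact: Cplus_comm. Qed.
Lemma Cfield_add0 : left_id (RtoC 0 : Cfield) Cplus.
Proof. exact: Cplus_0_l. Qed.
Lemma Cfield_addN : left_inverse (RtoC 0 : Cfield) Copp Cplus.
Proof. by move=> x; rewrite Cplus_comm; apply: Cplus_opp_r. Qed.
HB.instance Definition _ :=
  GRing.isZmodule.Build Cfield Cfield_addA Cfield_addC Cfield_add0 Cfield_addN.

Lemma Cfield_mulA : associative (Cmult : Cfield -> Cfield -> Cfield).
Proof. by move=> x y z; rewrite Cmult_assoc. Qed.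
Lemma Cfield_mulC : commutative (Cmult : Cfield -> Cfield -> Cfield).
Proof. exact: Cmult_comm. Qed.
Lemma Cfield_mul1 : left_id (RtoC 1 : Cfield) Cmult.
Proof. exact: Cmult_1_l. Qed.
Lemma Cfield_mulDl : left_distributive (Cmult : Cfield -> Cfield -> Cfield) Cplus.
Proof. exact: Cmult_plus_distr_r. Qed.
Lemma Cfield_1_neq0 : (RtoC 1 : Cfield) != RtoC 0.
Proof. by apply/eqP => H; injection H; lra. Qed.
HB.instance Definition _ := GRing.Zmodule_isComNzRing.Build Cfield
  Cfield_mulA Cfield_mulC Cfield_mul1 Cfield_mulDl Cfield_1_neq0.

Lemma Cfield_mulV (x : Cfield) : x != 0%ring -> ((Cinv x : Cfield) * x)%ring = 1%ring.
Proof. by move=> /eqP; apply: Cinv_l. Qed.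
Lemma Cfield_inv0 : (Cinv (0%ring : Cfield) : Cfield) = 0%ring.
Proof. by rewrite /Cinv /= /Rdiv !Rmult_0_l Ropp_0 Rmult_0_l. Qed.
HB.instance Definition _ := GRing.ComNzRing_isField.Build Cfield Cfield_mulV Cfield_inv0.

Lemma Rmult_assoc_law : associative Rmult.
Proof. by move=> x y z; rewrite Rmult_assoc. Qed.
Lemma Rplus_assoc_law : associative Rplus.
Proof. by move=> x y z; rewrite Rplus_assoc. Qed.
HB.instance Definition _ :=
  Monoid.isComLaw.Build R 1 Rmult Rmult_assoc_law Rmult_comm Rmult_1_l.
HB.instance Definition _ :=
  Monoid.isComLaw.Build R 0 Rplus Rplus_assoc_law Rplus_comm Rplus_0_l.

Lemma Rsum_le p (f g : 'I_p -> R) : (forall i, f i <= g i) ->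
  \big[Rplus/0]_(i < p) f i <= \big[Rplus/0]_(i < p) g i.
Proof. by move=> H; apply: (big_ind2 Rle) => //; [lra | move=> *; lra]. Qed.

Lemma Rsum_mulr p (f : 'I_p -> R) e :
  \big[Rplus/0]_(i < p) (f i * e) = (\big[Rplus/0]_(i < p) f i) * e.
Proof.
by apply: (big_ind2 (fun x y => x = y * e)) => [|x1 x2 y1 y2 -> ->|//]; ring.
Qed.

Lemma Rsum_ge0 p (f : 'I_p -> R) : (forall i, 0 <= f i) -> 0 <= \big[Rplus/0]_(i < p) f i.
Proof. by move=> H; apply: (big_ind (fun x => 0 <= x)) => //; [lra | move=> *; lra]. Qed.

Lemma Rsum_ge_term p (f : 'I_p -> R) j : (forall i, 0 <= f i) -> f j <= \big[Rplus/0]_(i < p) f i.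
Proof.
move=> H; rewrite (bigD1_ord j (P := xpredT)) //=.
rewrite -{1}(Rplus_0_r (f j)); apply: Rplus_le_compat_l.
exact: Rsum_ge0.
Qed.

Lemma Rprod_pos_le p (f g : 'I_p -> R) : (forall i, 0 < f i <= g i) ->
  0 < \big[Rmult/1]_(i < p) f i <= \big[Rmult/1]_(i < p) g i.
Proof.
move=> H; apply: (big_ind2 (fun x y => 0 < x <= y)) => //; first lra.
by move=> x1 x2 y1 y2 H1 H2; split; [apply: Rmult_lt_0_compat | apply: Rmult_le_compat]; lra.
Qed.

Lemma Cmod_sum_le p (F : 'I_p -> Cfield) :
  Cmod (\sum_(k < p) F k)%ring <= \big[Rplus/0]_(k < p) Cmod (F k).
Proof.
apply: (big_ind2 (fun (x : Cfield) y => Cmod x <= y)) => [|x1 y1 x2 y2 H1 H2|i _].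
- by rewrite Cmod_0; lra.
- by change (Cmod (Cplus x1 x2) <= y1 + y2); have := Cmod_triangle x1 x2; lra.
- exact: Rle_refl.
Qed.

Lemma tau_big n (m : 'I_n -> R) : tau n m = \big[Rmult/1]_(i < n) m i.
Proof.
rewrite /tau /ord_list -big_enum.
by elim: (enum 'I_n) => [|x s IH] /=; rewrite ?big_nil ?big_cons ?IH.
Qed.

Lemma tau_pos {n} {m : 'I_n -> R} : (forall k, 0 < m k) -> 0 < tau n m.
Proof.
by move=> Hm; rewrite tau_big; have [] := @Rprod_pos_le _ m m (fun i => conj (Hm i) (Rle_refl _)).
Qed.

Section WeightsOfInverse.
Import GRing.Theory.
Local Open Scope ring_scope.

Lemma det_neq0_perm {F : comPzRingType} {p} {M : 'M[F]_p} :
  \det M != 0 -> exists s : 'S_p, forall i, M i (s i) != 0.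
Proof.
move=> Hdet; case: (pickP (fun s : 'S_p => [forall i, M i (s i) != 0])) => [s /forallP|Hnone].
  by exists s.
case/eqP: Hdet; apply: big1 => s _.
have /negbT/forallPn [i] := Hnone s; rewrite negbK => /eqP Hi.
by rewrite (bigD1 i) //= Hi mul0r mulr0.
Qed.

Lemma cofactor_neq0_perm {F : comPzRingType} {p} {M : 'M[F]_p} {k j} :
  cofactor M k j != 0 -> exists s : 'S_p.-1, forall i, M (lift k i) (lift j (s i)) != 0.
Proof.
move=> Hcof; have Hdet : \det (row' k (col' j M)) != 0.
  by apply: contra Hcof; rewrite /cofactor => /eqP ->; rewrite mulr0.
by have [s Hs] := det_neq0_perm Hdet; exists s => i; have := Hs i; rewrite !mxE.
Qed.

Lemma mulmx1_cofactor_neq0 {F : comUnitRingType} {p} {A B : 'M[F]_p} {j k} :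
  A *m B = 1%:M -> A j k != 0 -> cofactor B k j != 0.
Proof.
move=> HAB; have [_ HB] := mulmx1_unit HAB.
have -> : A = invmx B by rewrite -[A]mulmx1 -(mulmxV HB) mulmxA HAB mul1mx.
by rewrite /invmx HB !mxE; apply: contra => /eqP ->; rewrite mulr0.
Qed.

Lemma mulmx1_weight_le {F : comUnitRingType} {p} {A B : 'M[F]_p} {m m' : 'I_p -> R} :
  A *m B = 1%:M -> (forall k, (0 < m k)%R) -> (forall j, (0 < m' j)%R) ->
  (forall k j, B k j != 0 -> (m' j <= m k)%R) ->
  forall j k, A j k != 0 ->
    (\big[Rmult/1]_(i < p) m' i * m k <= \big[Rmult/1]_(i < p) m i * m' j)%R.
Proof.
move=> HAB Hm Hm' HB j k HA.
have [s Hs] := cofactor_neq0_perm (mulmx1_cofactor_neq0 HAB HA).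
rewrite (bigD1_ord j (P := xpredT)) // (bigD1_ord k (P := xpredT)) //=.
rewrite (reindex_inj (@perm_inj _ s)) /=.
have [Hpos Hle] := @Rprod_pos_le _ (fun i => m' (lift j (s i))) (fun i => m (lift k i))
  (fun i => conj (Hm' _) (HB _ _ (Hs i))).
have := Rmult_lt_0_compat _ _ (Hm' j) (Hm k).
set P := (\big[Rmult/1]_(i < p.-1) m' (lift j (s i)))%R in Hpos Hle *.
set Q := (\big[Rmult/1]_(i < p.-1) m (lift k i))%R in Hle *.
nra.
Qed.

End WeightsOfInverse.

Section CoordinateMatrices.
Import GRing.Theory.
Local Open Scope ring_scope.
Variable n : nat.
Implicit Types (v : 'I_n -> cvec n) (z : cvec n).

Definition coord_mx v : 'M[Cfield]_n := \matrix_(k, q) (Cconj (v k q) : Cfield).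

Definition change_mx v v' : 'M[Cfield]_n := coord_mx v' *m invmx (coord_mx v).

Lemma Csum_big (f : 'I_n -> C) : Csum n f = \sum_(i < n) (f i : Cfield).
Proof.
rewrite /Csum /ord_list -big_enum.
by elim: (enum 'I_n) => [|x s IH] /=; rewrite ?big_nil ?big_cons ?IH.
Qed.

Lemma cdot_coord_mx v z k : cdot n z (v k) = \sum_q coord_mx v k q * (z q : Cfield).
Proof. by rewrite /cdot Csum_big; apply: eq_bigr => q _; rewrite mxE mulrC. Qed.

Lemma Cconj0 : Cconj (RtoC 0) = RtoC 0.
Proof. by rewrite /Cconj /= Ropp_0. Qed.

Lemma Cconj_sum (F : 'I_n -> Cfield) : Cconj (\sum_i F i) = \sum_i (Cconj (F i) : Cfield).
Proof. by apply: (big_morph Cconj Cplus_conj Cconj0). Qed.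

Lemma coord_mx_row_inj {v} : is_basis n v ->
  forall u : 'rV[Cfield]_n, u *m coord_mx v = 0 -> u = 0.
Proof.
move=> Hv u Hu; apply/rowP => q; rewrite mxE.
pose c j := Cconj (u 0 j).
have Hc k : Csum n (fun j => Cmult (c j) (v j k)) = RtoC 0.
  transitivity (Cconj ((u *m coord_mx v) 0 k)); last by rewrite Hu mxE Cconj0.
  rewrite Csum_big mxE Cconj_sum; apply: eq_bigr => j _.
  by rewrite mxE Cmult_conj Cconj_conj.
by rewrite -[u 0 q]Cconj_conj -/(c q) (Hv c Hc q) Cconj0.
Qed.

Lemma coord_mx_unit v : is_basis n v -> coord_mx v \in unitmx.
Proof.
move=> Hv; rewrite -row_free_unit -kermx_eq0; apply/eqP/row_matrixP => i.
by rewrite row0; apply: (coord_mx_row_inj Hv); rewrite -row_mul mulmx_ker row0.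
Qed.

Lemma change_mx_coord v v' : is_basis n v -> change_mx v v' *m coord_mx v = coord_mx v'.
Proof. by move=> Hv; rewrite -mulmxA mulVmx ?mulmx1 // coord_mx_unit. Qed.

Lemma change_mx_mulmx1 {v v'} : is_basis n v -> is_basis n v' ->
  change_mx v v' *m change_mx v' v = 1%:M.
Proof.
move=> Hv Hv'; rewrite /change_mx -mulmxA (mulmxA (invmx _)).
by rewrite mulVmx ?mul1mx ?mulmxV // coord_mx_unit.
Qed.

Lemma cdot_change_mx {v v' z j} : is_basis n v ->
  cdot n z (v' j) = \sum_k change_mx v v' j k * cdot n z (v k).
Proof.
move=> Hv; rewrite cdot_coord_mx -(change_mx_coord _ v' Hv).
under eq_bigr do rewrite mxE big_distrl /=.
rewrite exchange_big /=; apply: eq_bigr => k _.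
by rewrite cdot_coord_mx big_distrr /=; apply: eq_bigr => q _; rewrite mulrA.
Qed.

Definition test_vector v' j (t : R) : cvec n := fun q => Cmult t (invmx (coord_mx v') q j).

Lemma cdot_test_vector v v' j t k :
  cdot n (test_vector v' j t) (v k) = (RtoC t : Cfield) * change_mx v' v k j.
Proof.
rewrite cdot_coord_mx mxE big_distrr /=; apply: eq_bigr => q _.
rewrite /test_vector /= -[Cmult _ _]/((RtoC t : Cfield) * invmx (coord_mx v') q j).
by rewrite mulrCA.
Qed.

Lemma change_mx_id v : is_basis n v -> change_mx v v = 1%:M.
Proof. by move=> Hv; rewrite /change_mx mulmxV // coord_mx_unit. Qed.

End CoordinateMatrices.

Lemma cdot_le1_near_origin n (w : cvec n) : exists e, 0 < e /\
  forall z, (forall q, Cmod (z q) < e) -> Cmod (cdot n z w) <= 1.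
Proof.
pose S := \big[Rplus/0]_(q < n) Cmod (w q).
have HS : 0 <= S by apply: Rsum_ge0 => q; apply: Cmod_ge_0.
have He : 0 < / (1 + S) by apply: Rinv_0_lt_compat; lra.
exists (/ (1 + S)); split=> // z Hz.
rewrite /cdot Csum_big; apply: Rle_trans (Cmod_sum_le _ _) _.
apply: Rle_trans (@Rsum_le _ _ (fun q => Cmod (w q) * / (1 + S)) _) _.
  move=> q; rewrite Cmod_mult Cmod_conj Rmult_comm.
  by apply: Rmult_le_compat_l; [apply: Cmod_ge_0 | apply: Rlt_le].
rewrite Rsum_mulr -/S.
have -> : S * / (1 + S) = 1 - / (1 + S) by field; lra.
lra.
Qed.

Lemma Psi_le0_near_origin {n} v {m} : (forall k, 0 < m k) ->
  exists e, 0 < e /\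
    forall z, (forall q, Cmod (z q) < e) -> Rbar_le (Psi n v m z) (Finite 0).
Proof.
move=> Hm.
have [e [He Hcdot]] : exists e, 0 < e /\
    forall k z, (forall q, Cmod (z q) < e) -> Cmod (cdot n z (v k)) <= 1.
  apply: (@ex_uniform_radius n (fun k e =>
    forall z, (forall q, Cmod (z q) < e) -> Cmod (cdot n z (v k)) <= 1)).
  - by move=> k d d' Hd [_ Hd'] z Hz; apply: Hd => q; have := Hz q; lra.
  - by move=> k; apply: cdot_le1_near_origin.
exists e; split=> // z Hz; apply/Psi_le => // k.
by rewrite /Rdiv Rmult_0_l exp_0; apply: Hcdot.
Qed.

Lemma Psi_comp_le0_near {n} v {m} {phi : C -> cvec n} {al} : (forall k, 0 < m k) ->
  (forall q, @ex_derive C_AbsRing C_NormedModule (fun w => phi w q) al) ->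
  exists r, 0 < r <= 1 /\ forall zeta, Cmod zeta < r ->
    Rbar_le (Psi n v m (vsub n (phi (Cplus al zeta)) (phi al))) (Finite 0).
Proof.
move=> Hm Hphi; have [e [He HPsi]] := Psi_le0_near_origin v Hm.
have [d [Hd Hphid]] : exists d, 0 < d /\ forall q zeta, Cmod zeta < d ->
    Cmod (Cminus (phi (Cplus al zeta) q) (phi al q)) < e.
  apply: (@ex_uniform_radius n (fun q d => forall zeta, Cmod zeta < d ->
    Cmod (Cminus (phi (Cplus al zeta) q) (phi al q)) < e)).
  - by move=> q d d' Hq [_ Hd'] zeta Hzeta; apply: Hq; lra.
  - by move=> q; apply: ex_derive_C_near (Hphi q) He.
have Hmin := Rmin_l d 1.
exists (Rmin d 1); split; first by split; [apply: Rmin_pos; lra | apply: Rmin_r].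
by move=> zeta Hzeta; apply: HPsi => q; apply: Hphid; lra.
Qed.

Lemma test_vector_in_polydisk n (v' : 'I_n -> cvec n) j :
  exists t0, 0 < t0 /\ forall t, 0 < t <= t0 -> in_polydisk n (test_vector n v' j t).
Proof.
pose E q := Cmod (invmx (coord_mx n v') q j).
pose M := 1 + \big[Rplus/0]_(q < n) E q.
have HE q : 0 <= E q by apply: Cmod_ge_0.
have HM q : E q < M by have := @Rsum_ge_term _ E q HE; rewrite /M; lra.
have HM0 : 0 < M by have := HM j; have := HE j; lra.
exists (/ M); split=> [|t [Ht HtM] q]; first exact: Rinv_0_lt_compat.
rewrite /test_vector Cmod_mult Cmod_R Rabs_pos_eq -/(E q); last lra.
have := Rmult_le_compat_r M _ _ (Rlt_le _ _ HM0) HtM; rewrite Rinv_l; last lra.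
by have := HM q; have := HE q; nra.
Qed.

Lemma Psi_test_vector_le {n v' m'} : is_basis n v' -> (forall i, 0 < m' i) ->
  forall j t, 0 < t -> Rbar_le (Psi n v' m' (test_vector n v' j t)) (Finite (m' j * ln t)).
Proof.
move=> Hv' Hm' j t Ht; apply/Psi_le => // i.
rewrite cdot_test_vector change_mx_id // mxE.
have [->|Hij] := eqVneq i j; last by rewrite /= GRing.mulr0 Cmod_0; left; apply: exp_pos.
rewrite /= GRing.mulr1 Cmod_R Rabs_pos_eq; last lra.
rewrite (_ : m' j * ln t / m' j = ln t) ?exp_ln //; [exact: Rle_refl | field].
by have := Hm' j; lra.
Qed.

Lemma Psi_dominated_weight_le {n v m v' m' Cst} :
  is_basis n v' -> (forall k, 0 < m k) -> (forall j, 0 < m' j) ->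
  (forall z, in_polydisk n z ->
     Rbar_le (Psi n v m z) (Rbar_plus (Psi n v' m' z) (Finite Cst))) ->
  forall k j, change_mx n v' v k j != 0%ring -> m' j <= m k.
Proof.
move=> Hv' Hm Hm' Hdom k j Hkj; apply: Rnot_lt_le => Hlt.
have Hb : 0 < Cmod (change_mx n v' v k j) by apply/Cmod_gt_0; move/eqP: Hkj.
set b := Cmod _ in Hb.
have [t0 [Ht0 Hdisk]] := test_vector_in_polydisk n v' j.
(* At t = exp (-T) the domination reads m_k (ln b - T) <= m'_j (-T) + Cst,
   which fails for T this large since m_k < m'_j. *)
pose T := Rmax (- ln t0) ((Cst - m k * ln b + 1) / (m' j - m k)).
have HT : (Cst - m k * ln b + 1) / (m' j - m k) <= T by apply: Rmax_r.
have HT0 : - ln t0 <= T by apply: Rmax_l.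
have Ht : 0 < exp (- T) <= t0.
  split; first exact: exp_pos.
  by rewrite -(exp_ln t0 Ht0) exp_le_exp; lra.
have := Rbar_le_trans _ _ _ (Hdom _ (Hdisk _ Ht)) (Rbar_plus_le_compat _ _ _ _
  (Psi_test_vector_le Hv' Hm' j _ (proj1 Ht)) (Rbar_le_refl (Finite Cst))).
move/(Psi_le Hm)/(_ k); rewrite cdot_test_vector ln_exp.
rewrite Cmod_mult Cmod_R Rabs_pos_eq -/b; last exact: Rlt_le (proj1 Ht).
rewrite -[b](exp_ln b Hb) -exp_plus => /exp_le_exp; rewrite -Rle_div_r //.
have Hgap : 0 <= m' j - m k by lra.
have := Rmult_le_compat_l _ _ _ Hgap HT.
rewrite (_ : (m' j - m k) * _ = Cst - m k * ln b + 1); first nra.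
by field; lra.
Qed.

Lemma Psi_le_scaled {n v m v' m'} : is_basis n v ->
  (forall k, 0 < m k) -> (forall j, 0 < m' j) ->
  (forall j k, change_mx n v v' j k != 0%ring -> tau n m' * m k <= tau n m * m' j) ->
  exists K, forall z y, y <= 0 -> Rbar_le (Psi n v m z) (Finite y) ->
    Rbar_le (Psi n v' m' z) (Finite (tau n m' / tau n m * y + K)).
Proof.
move=> Hv Hm Hm' Hweight.
have Ht := tau_pos Hm; have Ht' := tau_pos Hm'.
pose S j := \big[Rplus/0]_(k < n) Cmod (change_mx n v v' j k).
have HS j : 0 <= S j by apply: Rsum_ge0 => k; apply: Cmod_ge_0.
pose K := \big[Rplus/0]_(j < n) (m' j * ln (1 + S j)).
have HK j : S j <= exp (K / m' j).
  have Hterm i : 0 <= m' i * ln (1 + S i).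
    by apply: Rmult_le_pos; [apply: Rlt_le | apply: ln_ge0; have := HS i; lra].
  have : ln (1 + S j) <= K / m' j.
    by rewrite -Rle_div_r // Rmult_comm; apply: (@Rsum_ge_term _ (fun i => m' i * ln (1 + S i))).
  by rewrite -exp_le_exp exp_ln; have := HS j; lra.
exists K => z y Hy /(Psi_le Hm) Hz; apply/Psi_le => // j.
set c := tau n m' / tau n m.
rewrite (cdot_change_mx _ Hv); apply: Rle_trans (Cmod_sum_le _ _) _.
apply: Rle_trans (@Rsum_le _ _ (fun k => Cmod (change_mx n v v' j k) * exp (c * y / m' j)) _) _.
  move=> k; rewrite Cmod_mult.
  have [->|Hjk] := eqVneq (change_mx n v v' j k) 0%ring.
    by rewrite Cmod_0 !Rmult_0_l; apply: Rle_refl.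
  apply: Rmult_le_compat_l; first exact: Cmod_ge_0.
  apply: Rle_trans (Hz k) _; apply/exp_le_exp.
  exact: nonpos_div_le_scaled (Hweight j k Hjk).
rewrite Rsum_mulr -/(S j).
have -> : (c * y + K) / m' j = K / m' j + c * y / m' j by field; have := Hm' j; lra.
by rewrite exp_plus; apply: Rmult_le_compat_r; [apply: Rlt_le; apply: exp_pos | apply: HK].
Qed.

Lemma liminf0_log_ratio_ge0 {P : C -> Rbar} {r0} : 0 < r0 <= 1 ->
  (forall zeta, Cmod zeta < r0 -> Rbar_le (P zeta) (Finite 0)) ->
  Rbar_le (Finite 0) (liminf0 (fun zeta => Rbar_div (P zeta) (Finite (ln (Cmod zeta))))).
Proof.
move=> Hr0 HP; apply: (liminf0_ge r0) => [|zeta Hzeta]; first lra.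
by rewrite Rbar_le_div_neg ?Rmult_0_l; [apply: HP | apply: ln_lt0]; lra.
Qed.

Lemma liminf0_log_ratio_scaled {P P' : C -> Rbar} {c K x r0} :
  0 < c -> 0 < r0 <= 1 ->
  (forall zeta, Cmod zeta < r0 -> Rbar_le (P zeta) (Finite 0)) ->
  (forall zeta y, y <= 0 -> Rbar_le (P zeta) (Finite y) ->
     Rbar_le (P' zeta) (Finite (c * y + K))) ->
  Rbar_le (Finite x) (liminf0 (fun zeta => Rbar_div (P zeta) (Finite (ln (Cmod zeta))))) ->
  Rbar_le (Finite (c * x))
    (liminf0 (fun zeta => Rbar_div (P' zeta) (Finite (ln (Cmod zeta))))).
Proof.
move=> Hc Hr0 HP HPP' Hx; apply: Rbar_le_of_le_minus_eps => eps Heps.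
pose e := eps / (c + 1).
have He : 0 < e by apply: Rdiv_lt_0_compat; lra.
have Heps_e : eps = e * (c + 1) by rewrite /e; field; lra.
have [r [Hr Hnear]] := liminf0_ge_near Hx He.
have [r1 [Hr1 [Hr1r [Hr1r0 Hr1K]]]] :
    exists r1, 0 < r1 /\ r1 <= r /\ r1 <= r0 /\ r1 <= exp (- K / e).
  exists (Rmin (Rmin r r0) (exp (- K / e))).
  have := Rmin_l (Rmin r r0) (exp (- K / e)); have := Rmin_r (Rmin r r0) (exp (- K / e)).
  have := Rmin_l r r0; have := Rmin_r r r0; have := exp_pos (- K / e).
  by split; [apply: Rmin_pos; [apply: Rmin_pos|]|]; lra.
apply: (liminf0_ge r1 Hr1) => zeta [Hzeta0 Hzeta].
set l := ln (Cmod zeta).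
have Hl : l < 0 by apply: ln_lt0; lra.
(* Below |zeta| = exp (-K/e), the additive constant K is absorbed by e * l. *)
have HlK : e * l < - K.
  have : l < - K / e by rewrite /l -(ln_exp (- K / e)); apply: ln_increasing; lra.
  by move/(Rmult_lt_compat_l e _ _ He); rewrite (_ : e * (- K / e) = - K) //; field; lra.
have Hy : Rbar_le (P zeta) (Finite ((x - e) * l)) by rewrite -Rbar_le_div_neg //; apply: Hnear; lra.
rewrite Rbar_le_div_neg // Heps_e.
have [Hneg|Hpos] := Rle_lt_dec ((x - e) * l) 0.
- by apply: Rbar_le_trans (HPP' _ _ Hneg Hy) _; rewrite /=; lra.
- have HP0 := HPP' _ _ (Rle_refl 0) (HP zeta ltac:(lra)).
  by apply: Rbar_le_trans HP0 _; have := Rmult_lt_0_compat _ _ Hc Hpos; rewrite /=; lra.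
Qed.

Lemma multiplicity_scaled {n} {phi : C -> cvec n} {a al v m v' m' K} :
  (forall k, 0 < m k) -> (forall j, 0 < m' j) ->
  (forall q, @ex_derive C_AbsRing C_NormedModule (fun w => phi w q) al) ->
  (forall z y, y <= 0 -> Rbar_le (Psi n v m z) (Finite y) ->
     Rbar_le (Psi n v' m' z) (Finite (tau n m' / tau n m * y + K))) ->
  exists M M', multiplicity n phi a v m al = Finite M /\
    multiplicity n phi a v' m' al = Finite M' /\ tau n m' / tau n m * M <= M'.
Proof.
move=> Hm Hm' Hphi Hscaled.
have Ht := tau_pos Hm; have Ht' := tau_pos Hm'.
have Hc : 0 < tau n m' / tau n m by apply: Rdiv_lt_0_compat.
rewrite /multiplicity; case: excluded_middle_informative => [Ha|_] /=; last first.
  by exists 0, 0; split; [|split; [|lra]].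
subst a.
have [r0 [Hr0 Hnear]] := Psi_comp_le0_near v Hm Hphi.
have [M [-> [HM HML]]] := Rbar_min2_ge (Rlt_le _ _ Ht) (liminf0_log_ratio_ge0 Hr0 Hnear).
have HcML := liminf0_log_ratio_scaled Hc Hr0 Hnear (fun zeta => Hscaled _) HML.
have HcMt : tau n m' / tau n m * M <= tau n m'.
  apply: Rle_trans (Rmult_le_compat_l _ _ _ (Rlt_le _ _ Hc) (proj2 HM)) _.
  by right; field; lra.
have [M' [-> [HM' _]]] := Rbar_min2_ge HcMt HcML.
by exists M, M'; split; [|split; [|lra]].
Qed.

Lemma Rbar_sum_over_scaled {A : C -> Prop} {f g : C -> Rbar} {c T} : 0 < c ->
  (forall x, A x -> exists M M', f x = Finite M /\ g x = Finite M' /\ c * M <= M') ->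
  Rbar_le (Rbar_sum_over A g) (Finite T) -> Rbar_le (Rbar_sum_over A f) (Finite (T / c)).
Proof.
move=> Hc Hfg HgT.
have Hlist l : (forall x, In x l -> A x) -> exists S S',
    fold_right Rbar_plus (Finite 0) (List.map f l) = Finite S /\
    fold_right Rbar_plus (Finite 0) (List.map g l) = Finite S' /\ c * S <= S'.
  elim: l => [|x l IH] Hl /=; first by exists 0, 0; split; [|split; [|lra]].
  have [S [S' [-> [-> HS]]]] := IH (fun y Hy => Hl y (or_intror Hy)).
  have [M [M' [-> [-> HM]]]] := Hfg x (Hl x (or_introl erefl)).
  by exists (M + S), (M' + S'); split; [|split; [|lra]].
apply: Rbar_lub_least => _ [l [Hnodup [Hl ->]]].
have [S [S' [-> [HS' HS]]]] := Hlist l Hl.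
have HS'T : Rbar_le (Finite S') (Finite T).
  by apply: Rbar_le_trans HgT; apply: Rbar_lub_ub; exists l; rewrite HS'.
rewrite /= -Rle_div_r //=; simpl in HS'T; lra.
Qed.

Theorem lemma5p1 (n : nat) (Omega : cvec n -> Prop)
  (v : 'I_n -> cvec n) (m : 'I_n -> R) (v' : 'I_n -> cvec n) (m' : 'I_n -> R)
  (Cst : R) (A : C -> Prop) (a : cvec n) (phi : C -> cvec n) :
  bounded_domain n Omega ->
  elem_indicator n v m ->
  elem_indicator n v' m' ->
  (forall z, in_polydisk n z ->
     Rbar_le (Psi n v m z) (Rbar_plus (Psi n v' m' z) (Finite Cst))) ->
  0 < tau n m' ->
  (forall x, A x -> Cmod x < 1) ->
  Omega a ->
  Hol_disk n Omega phi ->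
  Rbar_le (Rbar_sum_over A (multiplicity n phi a v' m')) (Finite (tau n m')) ->
  Rbar_le (Rbar_sum_over A (multiplicity n phi a v m)) (Finite (tau n m)).
Proof.
move=> _ [Hv Hm] [Hv' Hm'] Hdom _ HA _ [_ Hphi] Hsum'.
have Ht := tau_pos Hm; have Ht' := tau_pos Hm'.
have Hweight j k : change_mx n v v' j k != 0%ring -> tau n m' * m k <= tau n m * m' j.
  rewrite !tau_big; apply: (mulmx1_weight_le (change_mx_mulmx1 _ Hv Hv') Hm Hm').
  exact: Psi_dominated_weight_le Hv' Hm Hm' Hdom.
have [K HK] := Psi_le_scaled Hv Hm Hm' Hweight.
rewrite (_ : tau n m = tau n m' / (tau n m' / tau n m)); last by field; lra.
apply: (Rbar_sum_over_scaled _ _ Hsum'); first exact: Rdiv_lt_0_compat.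
move=> al Hal; apply: multiplicity_scaled Hm Hm' _ HK.
by move=> q; apply: Hphi; apply: HA.
Qed.
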